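(* Let $G$ be a finitely generated group in which every non-trivial element is a generalized torsion element. Then $G$ decomposes as a free product $G=A\ast B$ with $A$ and $B$ non-trivial if and only if $G$ is isomorphic to the infinite dihedral group $D_{\infty}=\mathbb{Z}_2\ast\mathbb{Z}_2$.
   Context: For $g,x$ in a group, $g^{x}:=xgx^{-1}$. A non-trivial element $g$ of a group $G$ is a generalized torsion element if there exist a positive integer $n$ and $x_1,\ldots,x_n\in G$ with $g^{x_1}g^{x_2}\cdots g^{x_n}=1$. $\mathbb{Z}_2$ denotes the cyclic group of order two. *)

From Stdlib Require Import ZArith Lia List Bool.
Import ListNotations.
Open Scope Z_scope.

Record grp := Grp {
  car :> Type;
  gmul : car -> car -> car;
  gone : car;
  ginv : car -> car;
  gmulA : forall x y z, gmul x (gmul y z) = gmul (gmul x y) z;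
  gmul1 : forall x, gmul gone x = x;
  gmulV : forall x, gmul (ginv x) x = gone
}.

Arguments gmul {g}.
Arguments gone {g}.
Arguments ginv {g}.

Definition conj {G : grp} (g x : G) : G := gmul x (gmul g (ginv x)).

Definition lprod {G : grp} (l : list G) : G := fold_right gmul gone l.

Definition gen_torsion {G : grp} (g : G) : Prop :=
  g <> gone /\
  exists xs : list G, xs <> [] /\ lprod (map (conj g) xs) = gone.

Definition is_subgroup {G : grp} (S : G -> Prop) : Prop :=
  S gone /\ (forall x y, S x -> S y -> S (gmul x y)) /\ (forall x, S x -> S (ginv x)).

Definition fin_gen (G : grp) : Prop :=
  exists s : list G, forall S : G -> Prop,
    is_subgroup S -> (forall x, In x s -> S x) -> forall g, S g.

Definition hom_on {G H : grp} (S : G -> Prop) (f : G -> H) : Prop :=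
  forall x y, S x -> S y -> f (gmul x y) = gmul (f x) (f y).

Definition hom {G H : grp} (f : G -> H) : Prop := hom_on (fun _ => True) f.

(* G is the (internal) free product of its subgroups A and B:
   universal property of the free product A * B (coproduct of groups). *)
Definition free_product (G : grp) (A B : G -> Prop) : Prop :=
  is_subgroup A /\ is_subgroup B /\
  forall (H : grp) (fA fB : G -> H), hom_on A fA -> hom_on B fB ->
    (exists phi : G -> H, hom phi /\
        (forall a, A a -> phi a = fA a) /\ (forall b, B b -> phi b = fB b)) /\
    (forall phi psi : G -> H, hom phi -> hom psi ->
        (forall a, A a -> phi a = psi a) -> (forall b, B b -> phi b = psi b) ->
        forall x, phi x = psi x).

Definition isomorphic (G H : grp) : Prop :=
  exists f : G -> H, hom f /\ (forall x y, f x = f y -> x = y) /\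
                     (forall y, exists x, f x = y).

(* The infinite dihedral group D_oo = Z ⋊ Z_2 (isomorphic to Z_2 * Z_2):
   elements (n, b); (n,b)(m,c) = (n + (-1)^b m, b xor c). *)
Definition dmul (x y : Z * bool) : Z * bool :=
  (fst x + (if snd x then - fst y else fst y), xorb (snd x) (snd y)).
Definition dinv (x : Z * bool) : Z * bool :=
  (if snd x then fst x else - fst x, snd x).

Lemma dmulA x y z : dmul x (dmul y z) = dmul (dmul x y) z.
Proof.
  destruct x as [a b], y as [c d], z as [e f]; unfold dmul; simpl.
  f_equal; [destruct b, d; simpl; lia | destruct b, d, f; reflexivity].
Qed.

Lemma dmul1 x : dmul (0, false) x = x.
Proof. destruct x as [a b]; unfold dmul; simpl; f_equal. Qed.

Lemma dmulV x : dmul (dinv x) x = (0, false).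
Proof. destruct x as [a b]; unfold dmul, dinv; simpl; destruct b; simpl; f_equal; lia. Qed.

Definition D_inf : grp := Grp (Z * bool) dmul (0, false) dinv dmulA dmul1 dmulV.

(* Map G into the group of reduced words over A and B.  For a nonempty word p,
   the Brooks function c_p(w) = #(occurrences of p in w) - #(occurrences of p^-1 in w) is
   a quasimorphism of defect at most 6|p| + 3.  A product of k conjugates of g has
   c >= k (c(g) - 4D) for a quasimorphism of defect D, so c(g) <= 4D when g is generalized
   torsion, and no h can satisfy c(h^k) >= k for all k.  Taking h = a b shows that every
   nontrivial a in A and b in B is an involution, and h = a1 b a2 b (a1 a2) b shows that A
   has no two distinct ones.  So A and B have order two and G = Z_2 * Z_2 = D_inf.
   Conversely D_inf is the free product of the subgroups generated by its two standard
   involutions. *)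

From Stdlib Require Import ZArith Lia List Bool ClassicalEpsilon ProofIrrelevance Classical.
Import ListNotations.

Local Infix "**" := gmul (at level 40, left associativity).

(** * Groups, powers and homomorphisms *)

Section GroupFacts.
Variable G : grp.
Implicit Types x y z : G.

Lemma mulgV x : x ** ginv x = gone.
Proof.
  rewrite <- (gmul1 _ (x ** ginv x)), <- (gmulV _ (ginv x)) at 1.
  rewrite <- gmulA, (gmulA _ (ginv x) x), gmulV, gmul1. apply gmulV.
Qed.

Lemma mulg1 x : x ** gone = x.
Proof. rewrite <- (gmulV _ x), gmulA, mulgV, gmul1. reflexivity. Qed.

Lemma mulgI z x y : z ** x = z ** y -> x = y.
Proof.
  intros E. rewrite <- (gmul1 _ x), <- (gmul1 _ y), <- (gmulV _ z), <- !gmulA, E.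
  reflexivity.
Qed.

Lemma mulIg z x y : x ** z = y ** z -> x = y.
Proof.
  intros E. rewrite <- (mulg1 x), <- (mulg1 y), <- (mulgV z), !gmulA, E. reflexivity.
Qed.

Lemma invg_eq_r x y : x ** y = gone -> y = ginv x.
Proof. intros E. apply (mulgI x). rewrite E, mulgV. reflexivity. Qed.

Lemma invg_eq_l x y : x ** y = gone -> x = ginv y.
Proof. intros E. apply (mulIg y). rewrite E, gmulV. reflexivity. Qed.

Lemma invgK x : ginv (ginv x) = x.
Proof. symmetry. apply invg_eq_r, gmulV. Qed.

Lemma invMg x y : ginv (x ** y) = ginv y ** ginv x.
Proof.
  symmetry. apply invg_eq_r.
  rewrite gmulA, <- (gmulA _ x y), mulgV, mulg1, mulgV. reflexivity.
Qed.

Lemma invg1 : ginv (@gone G) = gone.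
Proof. symmetry. apply invg_eq_r, mulg1. Qed.

Lemma mulg_idem x : x ** x = x -> x = gone.
Proof. intros E. apply (mulgI x). rewrite E, mulg1. reflexivity. Qed.

Definition involution x : Prop := x ** x = gone.

Lemma involutionE x : involution x <-> ginv x = x.
Proof.
  split; [intros E; symmetry; apply invg_eq_r, E|].
  intros E. unfold involution. rewrite <- E at 2. apply mulgV.
Qed.

Fixpoint gpow x (n : nat) : G :=
  match n with O => gone | S k => x ** gpow x k end.

Lemma gpowSr x n : gpow x (S n) = gpow x n ** x.
Proof.
  induction n as [|n IH]; simpl.
  - rewrite gmul1, mulg1. reflexivity.
  - simpl in IH. rewrite IH at 1. rewrite gmulA. reflexivity.
Qed.

Definition zpow x (n : Z) : G :=
  if Z.leb 0 n then gpow x (Z.to_nat n) else gpow (ginv x) (Z.to_nat (- n)).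

Lemma zpow1 x : zpow x 1 = x.
Proof. apply mulg1. Qed.

Lemma zpow_succ x n : zpow x (n + 1) = zpow x n ** x.
Proof.
  unfold zpow. destruct (Z.leb_spec 0 n), (Z.leb_spec 0 (n + 1)); try lia.
  - replace (Z.to_nat (n + 1)) with (S (Z.to_nat n)) by lia. apply gpowSr.
  - replace n with (-1) by lia. simpl. rewrite mulg1, gmulV. reflexivity.
  - replace (Z.to_nat (- n)) with (S (Z.to_nat (- (n + 1)))) by lia.
    rewrite gpowSr, <- gmulA, gmulV, mulg1. reflexivity.
Qed.

Lemma zpow_pred x n : zpow x (n - 1) = zpow x n ** ginv x.
Proof.
  replace n with (n - 1 + 1) at 2 by lia.
  rewrite zpow_succ, <- gmulA, mulgV, mulg1. reflexivity.
Qed.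

Lemma zpowD x m n : zpow x (m + n) = zpow x m ** zpow x n.
Proof.
  induction n using Z.peano_ind.
  - rewrite Z.add_0_r, mulg1. reflexivity.
  - rewrite <- !Z.add_1_r, Z.add_assoc, !zpow_succ, IHn, gmulA. reflexivity.
  - rewrite <- !Z.sub_1_r, Z.add_sub_assoc, !zpow_pred, IHn, gmulA. reflexivity.
Qed.

Lemma mul_zpow_dihedral u v n : involution u -> involution v ->
  u ** zpow (v ** u) n = zpow (v ** u) (- n) ** u.
Proof.
  intros Hu Hv.
  assert (Hw : u ** (v ** u) = ginv (v ** u) ** u).
  { rewrite invMg, (proj1 (involutionE u) Hu), (proj1 (involutionE v) Hv), !gmulA.
    reflexivity. }
  assert (Hw' : u ** ginv (v ** u) = v ** u ** u).
  { rewrite invMg, (proj1 (involutionE u) Hu), (proj1 (involutionE v) Hv), !gmulA, Hu,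
      gmul1, <- gmulA, Hu, mulg1.
    reflexivity. }
  induction n using Z.peano_ind.
  - simpl. rewrite mulg1, gmul1. reflexivity.
  - rewrite <- Z.add_1_r, zpow_succ, gmulA, IHn, <- gmulA, Hw, gmulA.
    replace (- (n + 1)) with (- n - 1) by lia. rewrite zpow_pred. reflexivity.
  - rewrite <- Z.sub_1_r, zpow_pred, gmulA, IHn, <- gmulA, Hw', gmulA.
    replace (- (n - 1)) with (- n + 1) by lia. rewrite zpow_succ. reflexivity.
Qed.

End GroupFacts.

Arguments involution {G}. Arguments gpow {G}. Arguments zpow {G}.

Lemma hom_on1 (G H : grp) (S : G -> Prop) (f : G -> H) :
  is_subgroup S -> hom_on S f -> f gone = gone.
Proof.
  intros [S1 _] hf. apply mulg_idem. rewrite <- hf by exact S1. rewrite gmul1. reflexivity.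
Qed.

Section Homomorphisms.
Variables G H : grp.
Variable f : G -> H.
Hypothesis hf : hom f.

Lemma hom1 : f gone = gone.
Proof. apply (hom_on1 _ _ (fun _ => True)); [repeat split | exact hf]. Qed.

Lemma homV x : f (ginv x) = ginv (f x).
Proof. apply invg_eq_l. rewrite <- hf by exact I. rewrite gmulV. apply hom1. Qed.

Lemma hom_gpow x n : f (gpow x n) = gpow (f x) n.
Proof. induction n; simpl. apply hom1. rewrite hf, IHn by exact I. reflexivity. Qed.

Lemma hom_zpow x n : f (zpow x n) = zpow (f x) n.
Proof. unfold zpow. destruct (0 <=? n); rewrite hom_gpow, ?homV; reflexivity. Qed.

Lemma subgroup_preimage (S : H -> Prop) : is_subgroup S -> is_subgroup (fun x => S (f x)).
Proof.
  intros (S1 & SM & SV). split; [|split].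
  - rewrite hom1. exact S1.
  - intros x y Hx Hy. rewrite hf by exact I. auto.
  - intros x Hx. rewrite homV. auto.
Qed.

End Homomorphisms.

Lemma hom_comp (G H K : grp) (f : G -> H) (g : H -> K) :
  hom f -> hom g -> hom (fun x => g (f x)).
Proof. intros hf hg x y _ _. rewrite hf, hg by exact I. reflexivity. Qed.

Lemma involution_subgroup (G : grp) (u : G) :
  involution u -> is_subgroup (fun x => x = gone \/ x = u).
Proof.
  intros Hu. split; [|split].
  - left. reflexivity.
  - intros x y [-> | ->] [-> | ->]; rewrite ?gmul1, ?mulg1; auto.
  - intros x [-> | ->]; [left; apply invg1 | right; apply involutionE, Hu].
Qed.

(** * The infinite dihedral group *)

Lemma hom_on_involution (G H : grp) (S : G -> Prop) (f : G -> H) x :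
  is_subgroup S -> hom_on S f -> S x -> involution x -> involution (f x).
Proof.
  intros HS hf Sx Hx. unfold involution.
  rewrite <- hf, Hx by exact Sx. apply (hom_on1 _ _ S); assumption.
Qed.

(* D_inf is generated by the involutions ds and dt, and (n, b) = (dt ds)^n ds^b. *)
Definition ds : D_inf := (0%Z, true).
Definition dt : D_inf := (1%Z, true).

Lemma ds_involution : involution ds. Proof. reflexivity. Qed.
Lemma dt_involution : involution dt. Proof. reflexivity. Qed.

Section DihedralMap.
Variable G : grp.
Variables u v : G.

Definition dih (p : D_inf) : G :=
  zpow (v ** u) (fst p) ** (if snd p then u else gone).

Lemma dih_ds : dih ds = u.
Proof. apply gmul1. Qed.

Lemma dih_dt : involution u -> dih dt = v.
Proof. intros Hu. unfold dih. simpl. rewrite zpow1, <- gmulA, Hu, mulg1. reflexivity. Qed.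

Lemma dih_hom : involution u -> involution v -> hom dih.
Proof.
  intros Hu Hv [n b] [m c] _ _. unfold dih. simpl.
  destruct b; simpl.
  - rewrite zpowD, <- !gmulA, (gmulA _ u), mul_zpow_dihedral, <- !gmulA by assumption.
    destruct c; rewrite ?Hu, ?mulg1; reflexivity.
  - rewrite zpowD, mulg1, !gmulA. reflexivity.
Qed.

End DihedralMap.

Arguments dih {G}.

Lemma hom_dih (G H : grp) (f : G -> H) u v p :
  hom f -> f (dih u v p) = dih (f u) (f v) p.
Proof.
  intros hf. unfold dih. rewrite hf, hom_zpow, hf by (exact I || exact hf).
  destruct (snd p); rewrite ?(hom1 _ _ f hf); reflexivity.
Qed.

Lemma dih_ds_dt (p : D_inf) : dih ds dt p = p.
Proof.
  assert (Hz : forall n, @zpow D_inf (1%Z, false) n = (n, false)).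
  { induction n using Z.peano_ind; [reflexivity| |].
    - rewrite <- Z.add_1_r, zpow_succ, IHn. reflexivity.
    - rewrite <- Z.sub_1_r, zpow_pred, IHn. unfold gmul; simpl; unfold dmul; simpl.
      f_equal; lia. }
  destruct p as [n b]. unfold dih. simpl. change (dmul dt ds) with ((1%Z, false) : D_inf).
  rewrite Hz. destruct b; unfold gmul; simpl; unfold dmul; simpl; f_equal; lia.
Qed.

Lemma free_product_of_iso_dinf (G : grp) : isomorphic G D_inf ->
  exists A B : G -> Prop, free_product G A B /\
    (exists a, A a /\ a <> gone) /\ (exists b, B b /\ b <> gone).
Proof.
  intros (f & hf & finj & fsurj).
  destruct (fsurj ds) as [u fu], (fsurj dt) as [v fv].
  assert (dih_f : forall x, dih u v (f x) = x).
  { intros x. apply finj. rewrite hom_dih, fu, fv by exact hf. apply dih_ds_dt. }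
  assert (Hu : involution u).
  { apply finj. rewrite hf, fu, hom1 by (exact I || exact hf). reflexivity. }
  assert (Hv : involution v).
  { apply finj. rewrite hf, fv, hom1 by (exact I || exact hf). reflexivity. }
  assert (f_one : forall x, f x = gone -> x = gone).
  { intros x E. rewrite <- (dih_f x), E. apply hom1, dih_hom; assumption. }
  pose proof (subgroup_preimage _ _ f hf _ (involution_subgroup _ ds ds_involution)) as SA.
  pose proof (subgroup_preimage _ _ f hf _ (involution_subgroup _ dt dt_involution)) as SB.
  exists (fun x => f x = gone \/ f x = ds), (fun x => f x = gone \/ f x = dt).
  split; [split; [exact SA|split; [exact SB|]] | split].
  - intros K fA fB hA hB. split.
    + assert (Hu' : involution (fA u)) by (apply (hom_on_involution _ _ _ _ u SA hA); auto).
      assert (Hv' : involution (fB v)) by (apply (hom_on_involution _ _ _ _ v SB hB); auto).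
      exists (fun x => dih (fA u) (fB v) (f x)). split; [|split].
      * apply hom_comp, dih_hom; assumption.
      * intros a [Ha | Ha]; rewrite Ha.
        -- rewrite (f_one a Ha), (hom1 _ _ _ (dih_hom _ _ _ Hu' Hv')).
           symmetry. apply (hom_on1 _ _ _ _ SA hA).
        -- rewrite dih_ds, <- (dih_f a), Ha, dih_ds. reflexivity.
      * intros b [Hb | Hb]; rewrite Hb.
        -- rewrite (f_one b Hb), (hom1 _ _ _ (dih_hom _ _ _ Hu' Hv')).
           symmetry. apply (hom_on1 _ _ _ _ SB hB).
        -- rewrite dih_dt, <- (dih_f b), Hb, dih_dt by assumption. reflexivity.
    + intros phi psi hphi hpsi EA EB x.
      rewrite <- (dih_f x), !hom_dih, (EA u), (EB v) by auto. reflexivity.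
  - exists u. split; [auto|]. intros E. rewrite E, hom1 in fu by exact hf. discriminate.
  - exists v. split; [auto|]. intros E. rewrite E, hom1 in fv by exact hf. discriminate.
Qed.

Definition collapse {G H : grp} (s : H) (x : G) : H :=
  if excluded_middle_informative (x = gone) then gone else s.

Lemma collapse_hom_on (G H : grp) (a : G) (s : H) : involution a -> a <> gone ->
  involution s -> hom_on (fun x => x = gone \/ x = a) (collapse s).
Proof.
  intros Ha Ha1 Hs x y [-> | ->] [-> | ->];
    rewrite ?gmul1, ?mulg1, ?Ha; unfold collapse;
    repeat destruct excluded_middle_informative; try contradiction;
    rewrite ?gmul1, ?mulg1, ?Hs; reflexivity.
Qed.

Lemma collapse_nontrivial (G H : grp) (s : H) (x : G) : x <> gone -> collapse s x = s.
Proof. intros Hx. unfold collapse. destruct excluded_middle_informative; tauto. Qed.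

Lemma iso_dinf_of_free_product (G : grp) (A B : G -> Prop) a b :
  free_product G A B -> A a -> B b -> involution a -> a <> gone -> involution b -> b <> gone ->
  (forall x, A x -> x = gone \/ x = a) -> (forall x, B x -> x = gone \/ x = b) ->
  isomorphic G D_inf.
Proof.
  intros (SA & SB & U) Aa Bb Ha Ha1 Hb Hb1 HA HB.
  assert (hA : hom_on A (collapse ds)).
  { intros x y Hx Hy. apply (collapse_hom_on _ _ a); auto. apply ds_involution. }
  assert (hB : hom_on B (collapse dt)).
  { intros x y Hx Hy. apply (collapse_hom_on _ _ b); auto. apply dt_involution. }
  destruct (U D_inf _ _ hA hB) as [[psi (hpsi & psiA & psiB)] _].
  assert (psi_a : psi a = ds) by (rewrite psiA by exact Aa; apply collapse_nontrivial, Ha1).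
  assert (psi_b : psi b = dt) by (rewrite psiB by exact Bb; apply collapse_nontrivial, Hb1).
  assert (hdih : hom (dih a b)) by (apply dih_hom; assumption).
  assert (psi_dih : forall p, psi (dih a b p) = p).
  { intros p. rewrite hom_dih, psi_a, psi_b by exact hpsi. apply dih_ds_dt. }
  assert (dih_psi : forall x, dih a b (psi x) = x).
  { assert (hid : forall S : G -> Prop, hom_on S (fun x => x)) by (intros S x y _ _; reflexivity).
    destruct (U G _ _ (hid A) (hid B)) as [_ Uniq].
    apply Uniq; [apply hom_comp; assumption | apply hid | |].
    - intros x Ax. destruct (HA x Ax) as [-> | ->].
      + rewrite (hom1 _ _ psi hpsi). apply (hom1 _ _ _ hdih).
      + rewrite psi_a. apply dih_ds.
    - intros x Bx. destruct (HB x Bx) as [-> | ->].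
      + rewrite (hom1 _ _ psi hpsi). apply (hom1 _ _ _ hdih).
      + rewrite psi_b. apply dih_dt, Ha. }
  exists psi. split; [exact hpsi | split].
  - intros x y E. rewrite <- (dih_psi x), <- (dih_psi y), E. reflexivity.
  - intros p. exists (dih a b p). apply psi_dih.
Qed.

(** * Quasimorphisms and generalized torsion *)

Section Quasimorphism.
Variable G : grp.
Variables (c : G -> Z) (D : Z).
Hypothesis c_quasi : forall x y, (Z.abs (c (x ** y) - c x - c y) <= D)%Z.
Hypothesis c1 : c gone = 0%Z.

Lemma quasi_conj_ge g x : (c g - 3 * D <= c (conj g x))%Z.
Proof.
  unfold conj. pose proof (c_quasi x (g ** ginv x)). pose proof (c_quasi g (ginv x)).
  pose proof (c_quasi x (ginv x)). rewrite mulgV, c1 in *. lia.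
Qed.

Lemma quasi_lprod_ge m ys : (forall y, In y ys -> m <= c y)%Z ->
  (Z.of_nat (length ys) * (m - D) <= c (lprod ys))%Z.
Proof.
  induction ys as [|y ys IH]; intros Hys.
  - change (lprod []) with (@gone G). rewrite c1. simpl. lia.
  - pose proof (c_quasi y (lprod ys)). pose proof (Hys y (or_introl eq_refl)).
    assert (IH' := IH (fun z Hz => Hys z (or_intror Hz))).
    change (lprod (y :: ys)) with (y ** lprod ys).
    change (length (y :: ys)) with (S (length ys)).
    rewrite Nat2Z.inj_succ, Z.mul_succ_l. lia.
Qed.

Lemma gen_torsion_quasi_le g : gen_torsion g -> (c g <= 4 * D)%Z.
Proof.
  intros (_ & xs & Hxs & Hprod).
  assert (Hle := quasi_lprod_ge (c g - 3 * D) (map (conj g) xs)).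
  rewrite Hprod, c1, length_map in Hle.
  assert (Hlen : (1 <= Z.of_nat (length xs))%Z) by (destruct xs; [congruence | simpl; lia]).
  assert (Hconj : forall y, In y (map (conj g) xs) -> (c g - 3 * D <= c y)%Z).
  { intros y Hy. apply in_map_iff in Hy. destruct Hy as (x & <- & _). apply quasi_conj_ge. }
  specialize (Hle Hconj). nia.
Qed.

Lemma gen_torsion_quasi_growth (h : G) :
  (forall g : G, g <> gone -> gen_torsion g) ->
  ~ (forall k, Z.of_nat k <= c (gpow h k))%Z.
Proof.
  intros Hall Hgrow.
  assert (HD : (0 <= D)%Z) by (specialize (c_quasi gone gone); rewrite gmul1, c1 in c_quasi; lia).
  set (g := gpow h (Z.to_nat (4 * D + 1))).
  assert (Cg : (4 * D + 1 <= c g)%Z) by (unfold g; rewrite <- (Z2Nat.id (4 * D + 1)) at 1; auto; lia).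
  assert (Hg : g <> gone) by (intros E; rewrite E, c1 in Cg; lia).
  pose proof (gen_torsion_quasi_le g (Hall g Hg)). lia.
Qed.

End Quasimorphism.

(** * Counting occurrences of subwords *)

Definition ind (P : Prop) : Z := if excluded_middle_informative P then 1%Z else 0%Z.

Lemma ind_true (P : Prop) : P -> ind P = 1%Z.
Proof. unfold ind. destruct excluded_middle_informative; tauto. Qed.

Lemma ind_false (P : Prop) : ~ P -> ind P = 0%Z.
Proof. unfold ind. destruct excluded_middle_informative; tauto. Qed.

Lemma ind_iff (P Q : Prop) : (P <-> Q) -> ind P = ind Q.
Proof. unfold ind. do 2 destruct excluded_middle_informative; tauto. Qed.

Lemma ind_bounds (P : Prop) : (0 <= ind P <= 1)%Z.
Proof. unfold ind. destruct excluded_middle_informative; lia. Qed.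

Lemma ind_or (P Q : Prop) : ~ (P /\ Q) -> ind (P \/ Q) = (ind P + ind Q)%Z.
Proof. unfold ind. do 3 destruct excluded_middle_informative; tauto || lia. Qed.

Lemma ind_le (P Q : Prop) : (P -> Q) -> (ind P <= ind Q)%Z.
Proof. unfold ind. do 2 destruct excluded_middle_informative; tauto || lia. Qed.

Section Occurrences.
Variable T : Type.
Implicit Types p l : list T.

Definition prefix p l := exists z, l = p ++ z.
Definition suffix p l := exists z, l = z ++ p.

Fixpoint occ p l : Z :=
  match l with [] => 0%Z | h :: t => (ind (prefix p (h :: t)) + occ p t)%Z end.

Lemma occ_hit p x l : prefix p (x :: l) -> occ p (x :: l) = (1 + occ p l)%Z.
Proof. intros H. simpl. rewrite ind_true by exact H. reflexivity. Qed.

Lemma occ_skip p x l : ~ prefix p (x :: l) -> occ p (x :: l) = occ p l.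
Proof. intros H. simpl. rewrite ind_false by exact H. reflexivity. Qed.

Lemma prefix_cons y p x l : prefix (y :: p) (x :: l) -> x = y /\ prefix p l.
Proof. intros [z Hz]. injection Hz as -> ->. split; [reflexivity | exists z; reflexivity]. Qed.

Lemma prefix_app p l m : prefix p l -> prefix p (l ++ m).
Proof. intros [z ->]. exists (z ++ m). symmetry. apply app_assoc. Qed.

Lemma prefix_app_long p l m :
  (length p <= length l)%nat -> prefix p (l ++ m) -> prefix p l.
Proof.
  intros Hl [z Hz]. destruct (app_eq_app _ _ _ _ Hz) as [w [[-> _] | [-> _]]].
  - exists w. reflexivity.
  - rewrite length_app in Hl. destruct w; [|simpl in Hl; lia].
    exists []. rewrite !app_nil_r. reflexivity.
Qed.

Lemma prefix_length p l : prefix p l -> (length p <= length l)%nat.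
Proof. intros [z ->]. rewrite length_app. lia. Qed.

Lemma suffix_length p l : suffix p l -> (length p <= length l)%nat.
Proof. intros [z ->]. rewrite length_app. lia. Qed.

Lemma prefix_snoc p l h : prefix p (l ++ [h]) <-> prefix p l \/ p = l ++ [h].
Proof.
  split.
  - intros [z Hz]. destruct z as [|a z] using rev_ind.
    + right. rewrite app_nil_r in Hz. auto.
    + left. rewrite app_assoc in Hz. apply app_inj_tail in Hz. destruct Hz as [-> _].
      exists z. reflexivity.
  - intros [H | ->]; [apply prefix_app, H | exists []; rewrite app_nil_r; reflexivity].
Qed.

Lemma suffix_cons p h l : suffix p (h :: l) <-> suffix p l \/ p = h :: l.
Proof.
  split.
  - intros [[|a z] Hz]; simpl in Hz.
    + right. auto.
    + left. injection Hz as _ ->. exists z. reflexivity.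
  - intros [[z ->] | ->]; [exists (h :: z) | exists []]; reflexivity.
Qed.

Lemma prefix_singleton p h : p <> [] -> prefix p [h] <-> p = [h].
Proof.
  intros Hp. split; [|intros ->; exists []; reflexivity].
  intros [z Hz]. destruct p as [|b p]; [contradiction|].
  injection Hz as -> Hz. symmetry in Hz. apply app_eq_nil in Hz.
  destruct Hz as [-> _]. reflexivity.
Qed.

Lemma suffix_singleton p h : p <> [] -> suffix p [h] <-> p = [h].
Proof.
  intros Hp. split; [|intros ->; exists []; reflexivity].
  intros [[|b z] Hz]; [auto|].
  injection Hz as _ Hz. symmetry in Hz. apply app_eq_nil in Hz. tauto.
Qed.

Lemma occ_app_bound p l1 l2 :
  (0 <= occ p (l1 ++ l2) - occ p l1 - occ p l2 <= Z.of_nat (length l1))%Z /\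
  (occ p (l1 ++ l2) - occ p l1 - occ p l2 <= Z.of_nat (length p))%Z.
Proof.
  induction l1 as [|h t IH]; [simpl; lia|].
  change ((h :: t) ++ l2) with (h :: (t ++ l2)). cbn [occ].
  change (length (h :: t)) with (S (length t)). rewrite Nat2Z.inj_succ.
  pose proof (ind_le _ _ (prefix_app p (h :: t) l2)) as Hmono. simpl app in Hmono.
  pose proof (ind_bounds (prefix p (h :: t ++ l2))).
  pose proof (ind_bounds (prefix p (h :: t))).
  destruct (Nat.le_gt_cases (length p) (S (length t))) as [Hle | Hgt].
  - assert (ind (prefix p (h :: t ++ l2)) <= ind (prefix p (h :: t)))%Z.
    { apply ind_le, (prefix_app_long p (h :: t) l2). simpl. lia. }
    lia.
  - lia.
Qed.

Lemma occ_snoc p l h : p <> [] ->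
  occ p (l ++ [h]) = (occ p l + ind (suffix p (l ++ [h])))%Z.
Proof.
  intros Hp. induction l as [|a l IH]; simpl.
  - rewrite Z.add_0_r. apply ind_iff.
    rewrite prefix_singleton, suffix_singleton by exact Hp. reflexivity.
  - rewrite IH.
    change (a :: l ++ [h]) with ((a :: l) ++ [h]).
    rewrite (ind_iff _ _ (prefix_snoc p (a :: l) h)).
    change ((a :: l) ++ [h]) with (a :: (l ++ [h])).
    rewrite (ind_iff _ _ (suffix_cons p a (l ++ [h]))).
    rewrite !ind_or; [lia | |];
      intros [H1 ->]; first [apply suffix_length in H1 | apply prefix_length in H1];
      simpl in H1; rewrite ?length_app in H1; simpl in H1; lia.
Qed.

Lemma occ_rev p l : p <> [] -> occ p (rev l) = occ (rev p) l.
Proof.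
  intros Hp. induction l as [|h t IH]; [reflexivity|].
  simpl. rewrite occ_snoc, IH, Z.add_comm by exact Hp. f_equal. apply ind_iff. split.
  - intros [z Hz]. exists (rev z).
    rewrite <- (rev_involutive (h :: t)), <- rev_app_distr, <- Hz. reflexivity.
  - intros [z Hz]. exists (rev z).
    rewrite <- (rev_involutive p), <- rev_app_distr, <- Hz. reflexivity.
Qed.

End Occurrences.

Arguments prefix {T}. Arguments suffix {T}. Arguments occ {T}.

Lemma occ_map (T U : Type) (f : T -> U) (g : U -> T) : (forall x, g (f x) = x) ->
  forall p l, occ (map f p) (map f l) = occ p l.
Proof.
  intros fK p l.
  assert (map_fK : forall m, map g (map f m) = m).
  { intros m. rewrite map_map, (map_ext _ _ fK). apply map_id. }
  induction l as [|h t IH]; [reflexivity|].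
  simpl. rewrite IH. f_equal. apply ind_iff. split.
  - intros [z Hz]. destruct (map_eq_app f (h :: t) (map f p) z Hz) as (l1 & l2 & E & E1 & _).
    apply (f_equal (map g)) in E1. rewrite !map_fK in E1. subst l1. exists l2. exact E.
  - intros [z Hz]. exists (map f z). rewrite <- map_app, <- Hz. reflexivity.
Qed.

(** * Reduced words over two subgroups *)

Section ReducedWords.
Variable G : grp.
Variables A B : G -> Prop.
Hypothesis SA : is_subgroup A.
Hypothesis SB : is_subgroup B.

(* A letter (e, x) stands for x read in A if e = true, in B if e = false. *)
Local Notation letter := (bool * G)%type.

Definition factor (e : bool) : G -> Prop := if e then A else B.

Lemma factorM e x y : factor e x -> factor e y -> factor e (x ** y).
Proof. destruct e; [apply SA | apply SB]. Qed.

Lemma factorV e x : factor e x -> factor e (ginv x).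
Proof. destruct e; [apply SA | apply SB]. Qed.

Fixpoint reduced (w : list letter) : Prop :=
  match w with
  | [] => True
  | s :: w' => factor (fst s) (snd s) /\ snd s <> gone /\ reduced w' /\
               match w' with [] => True | t :: _ => fst t <> fst s end
  end.

Definition letters_in (w : list letter) : Prop := Forall (fun s => factor (fst s) (snd s)) w.

Lemma reduced_letters_in w : reduced w -> letters_in w.
Proof. induction w; simpl; intros; constructor; tauto. Qed.

Definition lmul (s : letter) (w : list letter) : list letter :=
  if excluded_middle_informative (snd s = gone) then w else
  match w with
  | [] => [s]
  | t :: w' =>
      if Bool.bool_dec (fst s) (fst t) then
        if excluded_middle_informative (snd s ** snd t = gone) then w'
        else (fst s, snd s ** snd t) :: w'
      else s :: w
  end.

Ltac case_dec := match goal with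
  | |- context [excluded_middle_informative ?P] => destruct (excluded_middle_informative P)
  | |- context [Bool.bool_dec ?a ?b] => destruct (Bool.bool_dec a b)
  end.

Lemma lmul_reduced s w : reduced w -> factor (fst s) (snd s) -> reduced (lmul s w).
Proof.
  destruct s as [e x]. intros Hw Hs. unfold lmul; simpl in *.
  destruct w as [|[e' z] w']; repeat case_dec; simpl in *; subst; try tauto;
    destruct Hw as (Hz & Hz1 & Hw' & Hh); try tauto.
  all: repeat split; try tauto; try (apply factorM; tauto);
    try (destruct w'; simpl in *; tauto); congruence.
Qed.

Lemma lmul_letters_in s w : letters_in w -> factor (fst s) (snd s) -> letters_in (lmul s w).
Proof.
  destruct s as [e x]. unfold letters_in, lmul. simpl. intros Hw Hs.
  destruct w as [|[e' z] w']; [repeat case_dec; auto|].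
  inversion Hw as [|? ? Hz Hw']; subst. simpl in Hz.
  repeat case_dec; subst; repeat constructor; auto. apply factorM; auto.
Qed.

Lemma lmul1 e w : lmul (e, gone) w = w.
Proof. unfold lmul. simpl. case_dec; tauto. Qed.

Lemma lmul_nil e x : x <> gone -> lmul (e, x) [] = [(e, x)].
Proof. intros Hx. unfold lmul. simpl. case_dec; tauto. Qed.

Lemma lmul_same e x z w : x <> gone -> lmul (e, x) ((e, z) :: w) =
  if excluded_middle_informative (x ** z = gone) then w else (e, x ** z) :: w.
Proof.
  intros Hx. unfold lmul. simpl. case_dec; [tauto|].
  destruct (Bool.bool_dec e e); [reflexivity | tauto].
Qed.

Lemma lmul_diff e x e' z w : x <> gone -> e <> e' ->
  lmul (e, x) ((e', z) :: w) = (e, x) :: (e', z) :: w.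
Proof.
  intros Hx He. unfold lmul. simpl. case_dec; [tauto|].
  destruct (Bool.bool_dec e e'); [tauto | reflexivity].
Qed.

Lemma lmul_head e x w : x <> gone ->
  match w with [] => True | t :: _ => fst t <> e end -> lmul (e, x) w = (e, x) :: w.
Proof.
  intros Hx Hh. destruct w as [|[e' z] w]; [apply lmul_nil, Hx|].
  apply lmul_diff; simpl in *; congruence.
Qed.

Lemma lmul_reduced_cons s w : reduced (s :: w) -> lmul s w = s :: w.
Proof. destruct s as [e x]. simpl. intros (_ & Hx & _ & Hh). apply lmul_head; assumption. Qed.

Lemma lmulM e x y w : reduced w -> factor e x -> factor e y ->
  lmul (e, x) (lmul (e, y) w) = lmul (e, x ** y) w.
Proof.
  intros Hw Hx Hy.
  destruct (excluded_middle_informative (y = gone)) as [-> | Hy1].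
  { rewrite mulg1, lmul1. reflexivity. }
  destruct (excluded_middle_informative (x = gone)) as [-> | Hx1].
  { rewrite gmul1, lmul1. reflexivity. }
  destruct w as [|[e' z] w].
  - rewrite lmul_nil, lmul_same by assumption.
    destruct excluded_middle_informative as [E | E];
      [rewrite E, lmul1 | rewrite lmul_nil by exact E]; reflexivity.
  - simpl in Hw. destruct Hw as (Hz & Hz1 & Hw & Hh).
    destruct (Bool.bool_dec e e') as [<- | He].
    + rewrite (lmul_same e y) by exact Hy1.
      destruct (excluded_middle_informative (y ** z = gone)) as [Hyz | Hyz].
      * rewrite (lmul_reduced_cons (e, x)); [|simpl; tauto].
        destruct (excluded_middle_informative (x ** y = gone)) as [Hxy | Hxy].
        -- rewrite Hxy, lmul1, (invg_eq_l _ _ _ Hxy), (invg_eq_r _ _ _ Hyz). reflexivity.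
        -- rewrite lmul_same, <- gmulA, Hyz, mulg1 by exact Hxy.
           case_dec; [tauto | reflexivity].
      * rewrite lmul_same by exact Hx1.
        destruct (excluded_middle_informative (x ** y = gone)) as [Hxy | Hxy].
        -- rewrite Hxy, lmul1, gmulA, Hxy, gmul1. case_dec; [tauto | reflexivity].
        -- rewrite lmul_same, gmulA by exact Hxy. reflexivity.
    + rewrite lmul_diff, lmul_same by assumption.
      destruct excluded_middle_informative as [Hxy | Hxy];
        [rewrite Hxy, lmul1 | rewrite lmul_diff by assumption]; reflexivity.
Qed.

Definition wmul (u v : list letter) : list letter := fold_right lmul v u.

Lemma wmul_reduced u v : letters_in u -> reduced v -> reduced (wmul u v).
Proof. induction 1; simpl; intros; auto. apply lmul_reduced; auto. Qed.

Lemma wmul_letters_in u v : letters_in u -> letters_in v -> letters_in (wmul u v).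
Proof. induction 1; simpl; intros; auto. apply lmul_letters_in; auto. Qed.

Lemma wmul_app u1 u2 v : wmul (u1 ++ u2) v = wmul u1 (wmul u2 v).
Proof. apply fold_right_app. Qed.

Lemma wmul_reduced_app u v : reduced (u ++ v) -> wmul u v = u ++ v.
Proof.
  induction u as [|s u IH]; simpl; intros H; [reflexivity|].
  rewrite IH by tauto. apply lmul_reduced_cons, H.
Qed.

Lemma wmul_lmul s w v : letters_in w -> factor (fst s) (snd s) -> reduced v ->
  wmul (lmul s w) v = lmul s (wmul w v).
Proof.
  destruct s as [e x]. simpl. intros Hw Hx Hv.
  destruct (excluded_middle_informative (x = gone)) as [-> | Hx1].
  { rewrite !lmul1. reflexivity. }
  destruct w as [|[e' z] w]; [rewrite lmul_nil by exact Hx1; reflexivity|].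
  inversion Hw as [|? ? Hz Hw']; subst. simpl in Hz.
  destruct (Bool.bool_dec e e') as [<- | He].
  - rewrite lmul_same by exact Hx1. simpl.
    rewrite lmulM by (auto using wmul_reduced).
    destruct excluded_middle_informative as [E | E]; [rewrite E, lmul1|]; reflexivity.
  - rewrite lmul_diff by assumption. reflexivity.
Qed.

Lemma wmulA u v w : letters_in u -> letters_in v -> reduced w ->
  wmul (wmul u v) w = wmul u (wmul v w).
Proof.
  induction 1 as [|s u Hs Hu IH]; simpl; intros Hv Hw; [reflexivity|].
  rewrite wmul_lmul, IH; auto using wmul_letters_in.
Qed.

Definition linv (s : letter) : letter := (fst s, ginv (snd s)).
Definition winv (w : list letter) : list letter := rev (map linv w).

Lemma linvK s : linv (linv s) = s.
Proof. destruct s as [e x]. unfold linv. simpl. rewrite invgK. reflexivity. Qed.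

Lemma map_linvK w : map linv (map linv w) = w.
Proof. rewrite map_map, (map_ext _ _ linvK). apply map_id. Qed.

Lemma winvK w : winv (winv w) = w.
Proof. unfold winv. rewrite map_rev, rev_involutive. apply map_linvK. Qed.

Lemma winv_length w : length (winv w) = length w.
Proof. unfold winv. rewrite length_rev, length_map. reflexivity. Qed.

Lemma winv_nonnil w : w <> [] -> winv w <> [].
Proof. intros H E. apply H, length_zero_iff_nil. rewrite <- winv_length, E. reflexivity. Qed.

Lemma winv_letters_in w : letters_in w -> letters_in (winv w).
Proof.
  intros H. apply Forall_rev, Forall_map.
  eapply Forall_impl; [|exact H]. intros [e x]. apply factorV.
Qed.

Lemma wmul_winv w : reduced w -> wmul (winv w) w = [].
Proof.
  induction w as [|[e x] w IH]; simpl; intros H; [reflexivity|].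
  unfold winv in *. simpl. rewrite wmul_app. simpl.
  destruct H as (_ & Hx & Hw & _).
  assert (Hx' : ginv x <> gone) by (intros E; apply Hx; rewrite <- (invgK _ x), E; apply invg1).
  unfold linv. simpl. rewrite lmul_same by exact Hx'.
  case_dec; [apply IH, Hw | exfalso; auto using gmulV].
Qed.

Definition rword : Type := { w : list letter | reduced w }.

Lemma rword_eq (u v : rword) : proj1_sig u = proj1_sig v -> u = v.
Proof. apply eq_sig_hprop. intros. apply proof_irrelevance. Qed.

Definition rword_mul (u v : rword) : rword :=
  exist _ (wmul (proj1_sig u) (proj1_sig v))
    (wmul_reduced _ _ (reduced_letters_in _ (proj2_sig u)) (proj2_sig v)).

Definition rword_one : rword := exist _ [] I.

Definition rword_inv (u : rword) : rword :=
  exist _ (wmul (winv (proj1_sig u)) [])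
    (wmul_reduced _ [] (winv_letters_in _ (reduced_letters_in _ (proj2_sig u))) I).

Lemma rword_mulA u v w : rword_mul u (rword_mul v w) = rword_mul (rword_mul u v) w.
Proof.
  apply rword_eq. destruct u, v, w. simpl. symmetry. apply wmulA; auto using reduced_letters_in.
Qed.

Lemma rword_mul1 u : rword_mul rword_one u = u.
Proof. apply rword_eq. reflexivity. Qed.

Lemma rword_mulV u : rword_mul (rword_inv u) u = rword_one.
Proof.
  apply rword_eq. destruct u as [w Hw]. simpl.
  rewrite wmulA; auto using reduced_letters_in, winv_letters_in.
  - apply wmul_winv, Hw.
  - constructor.
Qed.

Definition word_grp : grp := Grp rword rword_mul rword_one rword_inv rword_mulA rword_mul1 rword_mulV.

Lemma wmul_shape u v : reduced u -> reduced v -> exists u1 r v1,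
  u = u1 ++ r /\ v = winv r ++ v1 /\
  (wmul u v = u1 ++ v1 \/ exists u1' e x y v1', u1 = u1' ++ [(e, x)] /\
     v1 = (e, y) :: v1' /\ wmul u v = u1' ++ (e, x ** y) :: v1').
Proof.
  intros Hu Hv. induction u as [|[e x] u0 IH].
  { exists [], [], v. auto. }
  simpl in Hu. destruct Hu as (Hx & Hx1 & Hu0 & Hh).
  destruct (IH Hu0) as (u1 & r & v1 & E1 & E2 & E3).
  change (wmul ((e, x) :: u0) v) with (lmul (e, x) (wmul u0 v)).
  destruct u1 as [|t u1].
  - simpl in E1. subst u0.
    destruct E3 as [E3 | (u1' & e0 & x0 & y0 & v1' & F1 & _)];
      [| destruct u1'; discriminate F1].
    simpl in E3. rewrite E3. destruct v1 as [|[e' y] v1].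
    { exists [(e, x)], r, []. split; [reflexivity|]. split; [exact E2|].
      left. apply lmul_nil, Hx1. }
    destruct (Bool.bool_dec e e') as [<- | Hne].
    + rewrite lmul_same by exact Hx1.
      destruct (excluded_middle_informative (x ** y = gone)) as [Hxy | Hxy].
      * exists [], ((e, x) :: r), v1. split; [reflexivity|]. split; [|left; reflexivity].
        rewrite E2. unfold winv. simpl. rewrite <- app_assoc. simpl.
        rewrite (invg_eq_r _ _ _ Hxy). reflexivity.
      * exists [(e, x)], r, ((e, y) :: v1). split; [reflexivity|]. split; [exact E2|].
        right. exists [], e, x, y, v1. auto.
    + rewrite lmul_diff by assumption. exists [(e, x)], r, ((e', y) :: v1).
      split; [reflexivity|]. split; [exact E2 | left; reflexivity].
  - simpl in E1. subst u0. simpl in Hh.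
    exists ((e, x) :: t :: u1), r, v1. split; [reflexivity|]. split; [exact E2|].
    destruct E3 as [E3 | (u1' & e0 & x0 & y0 & v1' & F1 & F2 & F3)].
    + left. rewrite E3. apply lmul_head; assumption.
    + right. exists ((e, x) :: u1'), e0, x0, y0, v1'.
      split; [rewrite F1; reflexivity|]. split; [exact F2|]. rewrite F3.
      destruct u1' as [|t' u1'']; simpl in F1; injection F1 as -> ?; subst;
        apply lmul_head; assumption.
Qed.


Definition brooks (p w : list letter) : Z := (occ p w - occ (winv p) w)%Z.

Lemma occ_winv p w : p <> [] -> occ p (winv w) = occ (winv p) w.
Proof.
  intros Hp. unfold winv. rewrite occ_rev by exact Hp.
  rewrite <- (map_linvK (rev p)), (occ_map _ _ linv linv linvK), map_rev. reflexivity.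
Qed.

Lemma brooks_winv p w : p <> [] -> brooks p (winv w) = (- brooks p w)%Z.
Proof.
  intros Hp. unfold brooks. rewrite !occ_winv, winvK by auto using winv_nonnil. lia.
Qed.

Lemma brooks_app p l1 l2 :
  (Z.abs (brooks p (l1 ++ l2) - brooks p l1 - brooks p l2) <= Z.of_nat (length p))%Z.
Proof.
  unfold brooks. pose proof (occ_app_bound _ p l1 l2) as H1.
  pose proof (occ_app_bound _ (winv p) l1 l2) as H2. rewrite winv_length in H2. lia.
Qed.

Lemma brooks_single p s : (Z.abs (brooks p [s]) <= 1)%Z.
Proof.
  unfold brooks. simpl.
  pose proof (ind_bounds (prefix p [s])). pose proof (ind_bounds (prefix (winv p) [s])). lia.
Qed.

Lemma brooks_wmul p u v : p <> [] -> reduced u -> reduced v ->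
  (Z.abs (brooks p (wmul u v) - brooks p u - brooks p v) <= 6 * Z.of_nat (length p) + 3)%Z.
Proof.
  intros Hp Hu Hv. destruct (wmul_shape u v Hu Hv) as (u1 & r & v1 & -> & -> & E).
  pose proof (brooks_app p u1 r). pose proof (brooks_app p (winv r) v1).
  pose proof (brooks_winv p r Hp).
  destruct E as [-> | (u1' & e & x & y & v1' & -> & -> & ->)].
  - pose proof (brooks_app p u1 v1). lia.
  - pose proof (brooks_app p u1' ([(e, x ** y)] ++ v1')).
    pose proof (brooks_app p [(e, x ** y)] v1').
    pose proof (brooks_app p u1' [(e, x)]).
    pose proof (brooks_app p [(e, y)] v1').
    pose proof (brooks_single p (e, x ** y)). pose proof (brooks_single p (e, x)).
    pose proof (brooks_single p (e, y)).
    simpl app in *. lia.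
Qed.

Definition rword_of (w : list letter) : rword :=
  match excluded_middle_informative (reduced w) with
  | left H => exist _ w H
  | right _ => rword_one
  end.

Lemma rword_of_val w : reduced w -> proj1_sig (rword_of w) = w.
Proof. intros H. unfold rword_of. destruct excluded_middle_informative; tauto. Qed.

Lemma letter_hom_on e : hom_on (factor e) (fun x => rword_of (lmul (e, x) []) : word_grp).
Proof.
  intros x y Hx Hy. apply rword_eq. simpl.
  rewrite !rword_of_val by (apply lmul_reduced; simpl; auto using factorM).
  assert (Hnil : forall s, wmul (lmul s []) (lmul (e, y) []) = lmul s (lmul (e, y) [])).
  { intros [e' z]. destruct (excluded_middle_informative (z = gone)) as [-> | Hz];
      [rewrite !lmul1 | rewrite lmul_nil by exact Hz]; reflexivity. }
  rewrite Hnil. symmetry. apply lmulM; simpl; auto.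
Qed.

Definition word_embedding (phi : G -> word_grp) : Prop :=
  hom phi /\ (forall a, A a -> proj1_sig (phi a) = lmul (true, a) []) /\
  (forall b, B b -> proj1_sig (phi b) = lmul (false, b) []).

Lemma free_product_word_embedding : free_product G A B -> exists phi, word_embedding phi.
Proof.
  intros (_ & _ & U).
  destruct (U word_grp _ _ (letter_hom_on true) (letter_hom_on false))
    as [[phi (hphi & phiA & phiB)] _].
  exists phi. split; [exact hphi | split].
  - intros a Ha. rewrite phiA by exact Ha. apply rword_of_val, lmul_reduced; simpl; auto.
  - intros b Hb. rewrite phiB by exact Hb. apply rword_of_val, lmul_reduced; simpl; auto.
Qed.

Lemma word_embedding_lprod phi q : word_embedding phi -> reduced q ->
  proj1_sig (phi (lprod (map snd q))) = q.
Proof.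
  intros (hphi & phiA & phiB). induction q as [|[e x] q IH]; intros Hq.
  - change (lprod (map snd [])) with (@gone G). rewrite (hom1 _ _ _ hphi). reflexivity.
  - change (lprod (map snd ((e, x) :: q))) with (x ** lprod (map snd q)).
    pose proof Hq as (Hx & Hx1 & Hq' & _).
    rewrite hphi by exact I. simpl. rewrite IH, <- (lmul_reduced_cons (e, x) q Hq) by exact Hq'.
    destruct e; simpl in Hx; [rewrite phiA | rewrite phiB]; auto;
      rewrite lmul_nil by exact Hx1; reflexivity.
Qed.

Fixpoint wrep (q : list letter) (k : nat) : list letter :=
  match k with O => [] | S k => q ++ wrep q k end.

Lemma hom_gpow_wrep (phi : G -> word_grp) h q : hom phi ->
  proj1_sig (phi h) = q -> (forall k, reduced (wrep q k)) ->
  forall k, proj1_sig (phi (gpow h k)) = wrep q k.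
Proof.
  intros hphi Hq Hrep k. induction k as [|k IH]; simpl.
  - rewrite (hom1 _ _ _ hphi). reflexivity.
  - rewrite hphi by exact I. simpl. rewrite Hq, IH. apply wmul_reduced_app, (Hrep (S k)).
Qed.

Lemma brooks_no_growth (phi : G -> word_grp) h q p : hom phi -> p <> [] ->
  (forall g : G, g <> gone -> gen_torsion g) ->
  proj1_sig (phi h) = q -> (forall k, reduced (wrep q k)) ->
  ~ (forall k, Z.of_nat k <= brooks p (wrep q k))%Z.
Proof.
  intros hphi Hp Hall Hq Hrep Hgrow.
  refine (gen_torsion_quasi_growth G (fun x => brooks p (proj1_sig (phi x)))
            (6 * Z.of_nat (length p) + 3) _ _ h Hall _).
  - intros x y. rewrite hphi by exact I. apply brooks_wmul; [exact Hp | apply proj2_sig ..].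
  - rewrite (hom1 _ _ _ hphi). reflexivity.
  - intros k. rewrite (hom_gpow_wrep phi h q hphi Hq Hrep). apply Hgrow.
Qed.


Hypothesis free_AB : free_product G A B.
Hypothesis all_gen_torsion : forall g : G, g <> gone -> gen_torsion g.

Lemma no_brooks_growth q p : p <> [] -> (forall k, reduced (wrep q k)) ->
  ~ (forall k, Z.of_nat k <= brooks p (wrep q k))%Z.
Proof.
  intros Hp Hrep. destruct (free_product_word_embedding free_AB) as [phi Hphi].
  apply (brooks_no_growth phi (lprod (map snd q)) q p (proj1 Hphi) Hp all_gen_torsion);
    [|exact Hrep].
  apply word_embedding_lprod; [exact Hphi|].
  specialize (Hrep 1%nat). simpl in Hrep. rewrite app_nil_r in Hrep. exact Hrep.
Qed.

Ltac not_prefix :=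
  let H := fresh in
  intros H; repeat (apply prefix_cons in H; let E := fresh in destruct H as [E H];
                    try (injection E; intros; congruence)).

(* (ab)^k contains k copies of ab, and b^-1 a^-1 occurs in it only if a, b are involutions. *)
Lemma free_factors_involutions a b : A a -> a <> gone -> B b -> b <> gone ->
  involution a /\ involution b.
Proof.
  intros Aa Ha1 Bb Hb1. rewrite !involutionE. apply NNPP. intros Hn.
  set (q := [(true, a); (false, b)]).
  apply (no_brooks_growth q q); [discriminate | |].
  - induction k as [|k IH]; simpl; [exact I|]. repeat split; auto; try discriminate.
    destruct k; [exact I | unfold q; simpl; discriminate].
  - intros k. unfold brooks. change (winv q) with [(false, ginv b); (true, ginv a)].
    induction k as [|k IH]; [simpl; lia|].
    change (wrep q (S k)) with ((true, a) :: (false, b) :: wrep q k).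
    rewrite occ_hit by (exists (wrep q k); reflexivity).
    do 2 (rewrite occ_skip by not_prefix).
    rewrite occ_skip, Nat2Z.inj_succ; [lia|].
    intros (Eb & H)%prefix_cons. injection Eb as Eb.
    destruct k as [|k]; destruct H as [z Hz]; [discriminate|].
    injection Hz as Ea _. auto.
Qed.

(* With a3 = a1 a2, the word (a1 b a2 b a3 b)^k contains a1 b a2 k times but never a2 b^-1 a1. *)
Lemma free_factor_two_involutions a1 a2 b :
  A a1 -> a1 <> gone -> involution a1 -> A a2 -> a2 <> gone -> involution a2 -> a1 <> a2 ->
  B b -> b <> gone -> False.
Proof.
  intros A1 H11 Hi1 A2 H21 Hi2 Hne Bb Hb1.
  set (a3 := a1 ** a2).
  assert (A3 : A a3) by (apply SA; assumption).
  assert (H31 : a3 <> gone).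
  { intros E. apply Hne. rewrite (invg_eq_l _ _ _ E). apply involutionE, Hi2. }
  assert (H13 : a3 <> a1).
  { intros E. apply H21, (mulgI _ a1). rewrite mulg1. exact E. }
  assert (H23 : a3 <> a2).
  { intros E. apply H11, (mulIg _ a2). rewrite gmul1. exact E. }
  set (q := [(true, a1); (false, b); (true, a2); (false, b); (true, a3); (false, b)]).
  set (p := [(true, a1); (false, b); (true, a2)]).
  apply (no_brooks_growth q p); [discriminate | |].
  - induction k as [|k IH]; simpl; [exact I|]. repeat split; auto; try discriminate.
    destruct k; [exact I | unfold q; simpl; discriminate].
  - intros k. unfold brooks.
    replace (winv p) with [(true, a2); (false, ginv b); (true, a1)]
      by (unfold winv, linv; simpl; rewrite (proj1 (involutionE _ _) Hi1),
            (proj1 (involutionE _ _) Hi2); reflexivity).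
    induction k as [|k IH]; [simpl; lia|].
    change (wrep q (S k)) with ((true, a1) :: (false, b) :: (true, a2) :: (false, b) ::
                                (true, a3) :: (false, b) :: wrep q k).
    rewrite occ_hit by (eexists; reflexivity).
    do 11 (rewrite occ_skip by not_prefix).
    rewrite Nat2Z.inj_succ. lia.
Qed.

Lemma free_factor_order_two a b x : A a -> a <> gone -> B b -> b <> gone -> A x ->
  x = gone \/ x = a.
Proof.
  intros Aa Ha1 Bb Hb1 Ax.
  destruct (classic (x = gone)) as [Hx1 | Hx1]; [left; exact Hx1 | right].
  apply NNPP. intros Hne.
  apply (free_factor_two_involutions a x b); auto.
  - apply (free_factors_involutions a b); assumption.
  - apply (free_factors_involutions x b); assumption.
Qed.

End ReducedWords.

Lemma free_product_swap (G : grp) (A B : G -> Prop) :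
  free_product G A B -> free_product G B A.
Proof.
  intros (SA & SB & U). split; [exact SB | split; [exact SA|]].
  intros H fB fA hB hA. destruct (U H fA fB hA hB) as [[phi (hphi & phiA & phiB)] Uniq].
  split; [exists phi; auto|].
  intros phi' psi' hphi' hpsi' EB EA. apply Uniq; assumption.
Qed.

Theorem theorem1p6 (G : grp) :
  fin_gen G ->
  (forall g : G, g <> gone -> gen_torsion g) ->
  ((exists A B : G -> Prop, free_product G A B /\
      (exists a, A a /\ a <> gone) /\ (exists b, B b /\ b <> gone))
   <-> isomorphic G D_inf).
Proof.
  intros _ Hall. split; [|apply free_product_of_iso_dinf].
  intros (A & B & Hfp & (a & Aa & Ha1) & (b & Bb & Hb1)).
  pose proof Hfp as (SA & SB & _).
  pose proof (free_product_swap G A B Hfp) as Hfp'.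
  destruct (free_factors_involutions G A B SA SB Hfp Hall a b Aa Ha1 Bb Hb1) as [Ha Hb].
  apply (iso_dinf_of_free_product G A B a b); auto.
  - intros x. apply (free_factor_order_two G A B SA SB Hfp Hall a b); assumption.
  - intros x. apply (free_factor_order_two G B A SB SA Hfp' Hall b a); assumption.
Qed.
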